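(* Let $\mathcal C$ be an $R$-coring satisfying the left $\alpha$-condition, and suppose $\mathcal C=\bigoplus_{i\in I}C_i$ as left $\mathcal C$-comodules. Then $\mathrm{Rat}^{\mathcal C}({}^*C_i)$ is dense in ${}^*C_i$ (finite topology) for every $i\in I$ if and only if $\mathrm{Rat}^{\mathcal C}({}^*\mathcal C)$ is dense in ${}^*\mathcal C$ (finite topology).
   Context: An $R$-coring is a triple $(\mathcal C,\Delta,\varepsilon)$ with $\mathcal C$ an $R$-bimodule and $\Delta:\mathcal C\to\mathcal C\otimes_R\mathcal C$, $\varepsilon:\mathcal C\to R$ coassociative and counital $R$-bimodule maps; write $\Delta(c)=c_{(1)}\otimes_R c_{(2)}$. ${}^*\mathcal C={}_R\mathrm{Hom}(\mathcal C,R)$ is a ring with product $(f\#g)(c)=g(c_{(1)}f(c_{(2)}))$. $\mathcal C$ satisfies the left $\alpha$-condition if it is locally projective as a left $R$-module. A left $\mathcal C$-comodule is a left $R$-module $M$ with a coassociative counital left $R$-linear map $M\to\mathcal C\otimes_R M$, $m\mapsto m_{[-1]}\otimes m_{[0]}$; $\mathcal C$ is a left comodule via $\Delta$. For a left comodule $M$, ${}^*M={}_R\mathrm{Hom}(M,R)$ is a right ${}^*\mathcal C$-module via $(h\cdot f)(m)=f(m_{[-1]}h(m_{[0]}))$ (for $M=\mathcal C$ this is right multiplication in ${}^*\mathcal C$). For a right ${}^*\mathcal C$-module $N$, $\mathrm{Rat}^{\mathcal C}(N)$ is the set of $n\in N$ for which there is $\sum_i n_i\otimes c_i\in N\otimes_R\mathcal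 C$ with $n\cdot f=\sum_i n_if(c_i)$ for all $f\in{}^*\mathcal C$ (the largest rational submodule). The finite topology on ${}_R\mathrm{Hom}(M,R)$ has basic open sets $\{g\mid g(x)=f(x)\ \forall x\in F\}$, $F\subseteq M$ finite. *)

From HB Require Import structures.
From mathcomp Require Import all_boot all_order all_algebra.
From Stdlib Require List.
Set Implicit Arguments. Unset Strict Implicit. Unset Printing Implicit Defensive.
Import GRing.Theory.
Local Open Scope ring_scope.

(* Left R-modules are [lmodType R].  An R-bimodule structure on C is the left
   structure of [C] plus a right action [ra : C -> R -> C]. *)

Definition is_bimodule (R : pzRingType) (C : lmodType R) (ra : C -> R -> C) :=
  [/\ forall x y r, ra (x + y) r = ra x r + ra y r,
      forall x r s, ra x (r + s) = ra x r + ra x s,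
      forall x r s, ra x (r * s) = ra (ra x r) s,
      forall x, ra x 1 = x
    & forall r x s, ra (r *: x) s = r *: ra x s].

(* Elements of C (x)_R C are represented by finite lists of pairs (formal sums
   of simple tensors); [teq2 ra s t] is the congruence defining C (x)_R C
   (the tensor product is the free commutative monoid on C*C modulo these
   relations, which is the usual abelian group C (x)_R C). *)
Inductive teq2 (R : pzRingType) (C : lmodType R) (ra : C -> R -> C) :
    seq (C * C) -> seq (C * C) -> Prop :=
| teq2_refl s : teq2 ra s s
| teq2_sym s t : teq2 ra s t -> teq2 ra t s
| teq2_trans s t u : teq2 ra s t -> teq2 ra t u -> teq2 ra s u
| teq2_cat s1 t1 s2 t2 : teq2 ra s1 t1 -> teq2 ra s2 t2 ->
    teq2 ra (s1 ++ s2) (t1 ++ t2)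
| teq2_swap s t : teq2 ra (s ++ t) (t ++ s)
| teq2_addl a b y : teq2 ra [:: (a + b, y)] [:: (a, y); (b, y)]
| teq2_addr a y z : teq2 ra [:: (a, y + z)] [:: (a, y); (a, z)]
| teq2_zerol y : teq2 ra [:: (0, y)] [::]
| teq2_zeror a : teq2 ra [:: (a, 0)] [::]
| teq2_bal a r y : teq2 ra [:: (ra a r, y)] [:: (a, r *: y)].

(* The same for C (x)_R C (x)_R C, elements ((a, b), c) meaning a (x) b (x) c. *)
Inductive teq3 (R : pzRingType) (C : lmodType R) (ra : C -> R -> C) :
    seq (C * C * C) -> seq (C * C * C) -> Prop :=
| teq3_refl s : teq3 ra s s
| teq3_sym s t : teq3 ra s t -> teq3 ra t s
| teq3_trans s t u : teq3 ra s t -> teq3 ra t u -> teq3 ra s u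
| teq3_cat s1 t1 s2 t2 : teq3 ra s1 t1 -> teq3 ra s2 t2 ->
    teq3 ra (s1 ++ s2) (t1 ++ t2)
| teq3_swap s t : teq3 ra (s ++ t) (t ++ s)
| teq3_add1 a a' b c : teq3 ra [:: (a + a', b, c)] [:: (a, b, c); (a', b, c)]
| teq3_add2 a b b' c : teq3 ra [:: (a, b + b', c)] [:: (a, b, c); (a, b', c)]
| teq3_add3 a b c c' : teq3 ra [:: (a, b, c + c')] [:: (a, b, c); (a, b, c')]
| teq3_zero1 b c : teq3 ra [:: (0, b, c)] [::]
| teq3_zero2 a c : teq3 ra [:: (a, 0, c)] [::]
| teq3_zero3 a b : teq3 ra [:: (a, b, 0)] [::]
| teq3_bal12 a r b c : teq3 ra [:: (ra a r, b, c)] [:: (a, r *: b, c)]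
| teq3_bal23 a b r c : teq3 ra [:: (a, ra b r, c)] [:: (a, b, r *: c)].

(* An R-coring structure on C: right action [ract], comultiplication [Delta]
   (Delta c is a representative of Delta(c) in C (x)_R C) and counit [eps]. *)
Record coring (R : pzRingType) (C : lmodType R) := Coring {
  ract : C -> R -> C;
  Delta : C -> seq (C * C);
  eps : C -> R;
  ract_bimod : is_bimodule ract;
  Delta_add : forall x y, teq2 ract (Delta (x + y)) (Delta x ++ Delta y);
  Delta_lin : forall r x,
    teq2 ract (Delta (r *: x)) [seq (r *: p.1, p.2) | p <- Delta x];
  Delta_rlin : forall x r,
    teq2 ract (Delta (ract x r)) [seq (p.1, ract p.2 r) | p <- Delta x];
  eps_add : forall x y, eps (x + y) = eps x + eps y;
  eps_lin : forall r x, eps (r *: x) = r * eps x;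
  eps_rlin : forall x r, eps (ract x r) = eps x * r;
  Delta_coassoc : forall c,
    teq3 ract
      (flatten [seq [seq (q.1, q.2, p.2) | q <- Delta p.1] | p <- Delta c])
      (flatten [seq [seq (p.1, q.1, q.2) | q <- Delta p.2] | p <- Delta c]);
  counit_l : forall c, \sum_(p <- Delta c) eps p.1 *: p.2 = c;
  counit_r : forall c, \sum_(p <- Delta c) ract p.1 (eps p.2) = c
}.

Definition llinear (R : pzRingType) (M N : lmodType R) (f : M -> N) :=
  (forall x y, f (x + y) = f x + f y) /\ (forall r x, f (r *: x) = r *: f x).

(* Local projectivity of a left R-module (Zimmermann-Huisgen): for every
   epimorphism p : L -> N, every g : M -> N and every finitely generated
   submodule M0 of M (given by a finite generating list F) there is
   h : M -> L with p o h = g on M0. *)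
Definition locally_projective (R : pzRingType) (M : lmodType R) :=
  forall (L N : lmodType R) (p : L -> N) (g : M -> N) (F : seq M),
    llinear p -> (forall n, exists l, p l = n) -> llinear g ->
    exists h : M -> L, llinear h /\
      (forall m, (exists a : seq R,
                    m = \sum_(i < size F) a`_i *: F`_i) -> p (h m) = g m).

Definition left_alpha_condition (R : pzRingType) (C : lmodType R)
  (K : coring C) := locally_projective C.

(* Left R-linear functionals on a left R-submodule P of C (values outside P
   are irrelevant): the elements of *P = _R Hom(P, R). *)
Definition ldual_on (R : pzRingType) (C : lmodType R) (P : C -> Prop)
    (h : C -> R) :=
  (forall x y, P x -> P y -> h (x + y) = h x + h y) /\
  (forall r x, P x -> h (r *: x) = r * h x).

Definition ldual (R : pzRingType) (C : lmodType R) (f : C -> R) :=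
  ldual_on (fun _ => True) f.

Definition lsubmod (R : pzRingType) (C : lmodType R) (P : C -> Prop) :=
  [/\ P 0, forall x y, P x -> P y -> P (x + y) & forall r x, P x -> P (r *: x)].

(* P is a left subcomodule of C: the coaction (restriction of Delta) lands in
   C (x)_R P, i.e. Delta m has a representative with second factors in P. *)
Definition lsubcomod (R : pzRingType) (C : lmodType R) (K : coring C)
    (P : C -> Prop) :=
  lsubmod P /\
  forall m, P m -> exists D, teq2 (ract K) (Delta K m) D /\
                             forall q, q \in D -> P q.2.

Definition coact_rep (R : pzRingType) (C : lmodType R) (K : coring C)
    (P : C -> Prop) (m : C) (D : seq (C * C)) :=
  teq2 (ract K) (Delta K m) D /\ forall q, q \in D -> P q.2.

(* Rat^C( *P ): h in *P is rational iff there are n_j in *P, c_j in C with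
   h . f = sum_j n_j f(c_j) for all f in *C, where the right *C-action is
   (h . f)(m) = f(m_[-1] h(m_[0])) and *P is a right R-module via
   (n r)(m) = n(m) r. *)
Definition rational (R : pzRingType) (C : lmodType R) (K : coring C)
    (P : C -> Prop) (h : C -> R) :=
  exists L : seq ((C -> R) * C),
    (forall q, List.In q L -> ldual_on P q.1) /\
    forall (f : C -> R) (m : C) (D : seq (C * C)),
      ldual f -> P m -> coact_rep K P m D ->
      f (\sum_(q <- D) ract K q.1 (h q.2)) = \sum_(q <- L) q.1 m * f q.2.

Definition rat_dense (R : pzRingType) (C : lmodType R) (K : coring C)
    (P : C -> Prop) :=
  forall (h : C -> R) (F : seq C), ldual_on P h -> (forall x, x \in F -> P x) ->
    exists g, ldual_on P g /\ rational K P g /\ forall x, x \in F -> g x = h x.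

Definition comod_decomposition (R : pzRingType) (C : lmodType R)
    (K : coring C) (I : eqType) (Ci : I -> C -> Prop) :=
  [/\ forall i, lsubcomod K (Ci i),
      forall c, exists s : seq (I * C),
        (forall q, q \in s -> Ci q.1 q.2) /\ c = \sum_(q <- s) q.2
    & forall (s : seq I) (m : I -> C), uniq s -> (forall i, Ci i (m i)) ->
        \sum_(i <- s) m i = 0 -> forall i, i \in s -> m i = 0].

From HB Require Import structures.
From mathcomp Require Import all_boot all_order all_algebra.
From Stdlib Require Import ClassicalEpsilon.

Import GRing.Theory.

(* Fix a decomposition C = (+)_i C_i into left subcomodules and write pi_i for
   the projections onto the summands (chosen classically).  For g in *C_i
   the functional g o pi_i belongs to *C, and the coaction of C respects the
   decomposition, so m_[-1] (g o pi_i)(m_[0]) only sees the component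
   pi_i m.  Consequently:
   - restriction: rational elements of *C restrict to rational elements of
     *C_i, so a rational approximation of h o pi_i on F restricts to one of h;
   - gluing: extending rational g_i in *C_i by g_i o pi_i gives rational
     elements of *C, and rational elements are closed under finite sums; for
     h in *C and a finite F, summing approximations of h on pi_i F over the
     finitely many components met by F approximates h on F. *)

Lemma self_add0 (V : zmodType) (a : V) : a = (a + a)%R -> a = 0%R.
Proof. by move=> h; rewrite -[RHS](subrr a) {2}h addrK. Qed.

Section CoringFacts.
Local Open Scope ring_scope.
Context {R : pzRingType} {C : lmodType R} (K : coring C).
Local Notation ra := (ract K).

Lemma ra_addl x y r : ra (x + y) r = ra x r + ra y r.
Proof. by case: (ract_bimod K) => H _ _ _ _; apply: H. Qed.

Lemma ra_addr x r s : ra x (r + s) = ra x r + ra x s.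
Proof. by case: (ract_bimod K) => _ H _ _ _; apply: H. Qed.

Lemma ra_mul x r s : ra x (r * s) = ra (ra x r) s.
Proof. by case: (ract_bimod K) => _ _ H _ _; apply: H. Qed.

Lemma ra0r x : ra x 0 = 0.
Proof. by apply: self_add0; rewrite -ra_addr addr0. Qed.

Lemma ra0l r : ra 0 r = 0.
Proof. by apply: self_add0; rewrite -ra_addl addr0. Qed.

Lemma ldual_on0 {P : C -> Prop} {h} : ldual_on P h -> P 0 -> h 0 = 0.
Proof. by move=> [hD _] P0; apply: self_add0; rewrite -hD // addr0. Qed.

Lemma ldual_on_sub {P Q : C -> Prop} {h} :
  (forall x, P x -> Q x) -> ldual_on Q h -> ldual_on P h.
Proof.
by move=> PQ [hD hZ]; split=> [x y Px Py | r x Px]; [apply: hD | apply: hZ]; apply: PQ.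
Qed.

Lemma ldual_on_add {P : C -> Prop} {g1 g2} :
  ldual_on P g1 -> ldual_on P g2 -> ldual_on P (fun c => g1 c + g2 c).
Proof.
move=> [D1 Z1] [D2 Z2]; split=> [x y Px Py | r x Px].
  by rewrite D1 // D2 // addrACA.
by rewrite Z1 // Z2 // mulrDr.
Qed.

Definition contract (phi : C -> R) (D : seq (C * C)) :=
  \sum_(q <- D) ra q.1 (phi q.2).

Lemma contract_teq2 {phi D D'} :
  ldual phi -> teq2 ra D D' -> contract phi D = contract phi D'.
Proof.
move=> lp; have p0 := ldual_on0 lp I; case: lp => pD pZ.
elim=> {D D'} //=; rewrite /contract.
- by move=> ? ? ? _ -> _ ->.
- by move=> s1 t1 s2 t2 _ e1 _ e2; rewrite !big_cat e1 e2.
- by move=> s t; rewrite !big_cat /= addrC.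
- by move=> a b y; rewrite !big_cons !big_nil /= ra_addl !addr0.
- by move=> a y z; rewrite !big_cons !big_nil /= pD // ra_addr !addr0.
- by move=> y; rewrite !big_cons !big_nil /= ra0l !addr0.
- by move=> a; rewrite !big_cons !big_nil /= p0 ra0r !addr0.
- by move=> a r y; rewrite !big_cons !big_nil /= pZ // ra_mul !addr0.
Qed.

(* The map m |-> m_(1) phi(m_(2)) underlying the right *C-action on *C. *)
Definition coact_eval (phi : C -> R) (m : C) := contract phi (Delta K m).

Lemma coact_evalD {phi} : ldual phi ->
  forall x y, coact_eval phi (x + y) = coact_eval phi x + coact_eval phi y.
Proof.
by move=> lp x y; rewrite /coact_eval (contract_teq2 lp (Delta_add K x y)) /contract big_cat.
Qed.

Lemma coact_eval0 {phi} : ldual phi -> coact_eval phi 0 = 0.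
Proof. by move=> lp; apply: self_add0; rewrite -(coact_evalD lp) addr0. Qed.

Lemma rational_sub {P Q : C -> Prop} {h} :
  (forall x, P x -> Q x) -> rational K Q h -> rational K P h.
Proof.
move=> PQ [L [LQ eL]]; exists L; split=> [q /LQ | f m D lf Pm [tD DP]].
  exact: ldual_on_sub.
by apply: eL => //; [apply: PQ | split=> // q /DP; apply: PQ].
Qed.

Lemma rational_add {P : C -> Prop} {g1 g2} :
  rational K P g1 -> rational K P g2 -> rational K P (fun c => g1 c + g2 c).
Proof.
move=> [L1 [L1P e1]] [L2 [L2P e2]]; exists (L1 ++ L2); split.
  by move=> q /(@List.in_app_or _ L1 L2 q) [/L1P | /L2P].
move=> f m D lf Pm Dm.
rewrite (eq_bigr _ (fun q _ => ra_addr _ _ _)) big_split /= lf.1 //.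
by rewrite (e1 f m D) // (e2 f m D) // big_cat.
Qed.

Lemma rational_zero (P : C -> Prop) : rational K P (fun _ => 0).
Proof.
exists [::]; split=> // f m D lf _ _.
by rewrite big_nil big1 ?(ldual_on0 lf) // => q _; rewrite ra0r.
Qed.

End CoringFacts.

Section Decomposition.
Local Open Scope ring_scope.
Context {R : pzRingType} {C : lmodType R} {K : coring C}.
Context {J : eqType} {Ci : J -> C -> Prop} (dec : comod_decomposition K Ci).

Lemma Ci_submod i : lsubmod (Ci i).
Proof. by case: dec => H _ _; case: (H i). Qed.

Lemma Ci0 i : Ci i 0.
Proof. by case: (Ci_submod i). Qed.

Lemma CiD i x y : Ci i x -> Ci i y -> Ci i (x + y).
Proof. by case: (Ci_submod i) => _ H _; apply: H. Qed.

Lemma CiZ i r x : Ci i x -> Ci i (r *: x).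
Proof. by case: (Ci_submod i) => _ _ H; apply: H. Qed.

Lemma CiN i x : Ci i x -> Ci i (- x).
Proof. by move=> h; rewrite -scaleN1r; apply: CiZ. Qed.

Lemma Ci_sum i (A : eqType) (s : seq A) (P : pred A) (F : A -> C) :
  (forall j, j \in s -> P j -> Ci i (F j)) -> Ci i (\sum_(j <- s | P j) F j).
Proof.
move=> h; rewrite big_seq_cond; apply: big_ind => //; [exact: Ci0 | exact: CiD |].
by move=> j /andP [] /h.
Qed.

Lemma Ci_coact {i m} : Ci i m -> exists D, coact_rep K (Ci i) m D.
Proof. by case: dec => H _ _; case: (H i) => _; apply. Qed.

Lemma decomposes c : exists s : seq (J * C),
  (forall q, q \in s -> Ci q.1 q.2) /\ c = \sum_(q <- s) q.2.
Proof. by case: dec => _ H _; apply: H. Qed.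

Definition split_of (c : C) :=
  proj1_sig (constructive_indefinite_description _ (decomposes c)).

Lemma split_ofP c :
  (forall q, q \in split_of c -> Ci q.1 q.2) /\ c = \sum_(q <- split_of c) q.2.
Proof. exact: proj2_sig (constructive_indefinite_description _ (decomposes c)). Qed.

Definition pi i c := \sum_(q <- split_of c | q.1 == i) q.2.

Lemma sum_by_tag (U : seq J) (t : seq (J * C)) :
  uniq U -> (forall q, q \in t -> q.1 \in U) ->
  \sum_(j <- U) \sum_(q <- t | q.1 == j) q.2 = \sum_(q <- t) q.2.
Proof.
move=> uU tU; under eq_bigr => j _ do rewrite big_mkcond.
rewrite exchange_big /= big_seq [RHS]big_seq; apply: eq_bigr => q qt.
rewrite (bigD1_seq q.1) ?tU //= eqxx big1 ?addr0 // => j /negPf.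
by rewrite eq_sym => ->.
Qed.

(* Directness: the i-th component of c can be read off ANY decomposition. *)
Lemma pi_of_split t c i : (forall q, q \in t -> Ci q.1 q.2) ->
  c = \sum_(q <- t) q.2 -> pi i c = \sum_(q <- t | q.1 == i) q.2.
Proof.
move=> ht hc; case: (split_ofP c) => hs hc'.
set U := undup ([seq q.1 | q <- split_of c] ++ [seq q.1 | q <- t]).
have uU : uniq U by apply: undup_uniq.
have sU q : q \in split_of c -> q.1 \in U.
  by move=> qs; rewrite mem_undup mem_cat map_f.
have tU q : q \in t -> q.1 \in U.
  by move=> qt; rewrite mem_undup mem_cat; apply/orP; right; apply: map_f.
pose m j := pi j c - \sum_(q <- t | q.1 == j) q.2.
have mC j : Ci j (m j).
  apply: CiD; last apply: CiN.
    by apply: Ci_sum => q qs /eqP <-; apply: hs.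
  by apply: Ci_sum => q qt /eqP <-; apply: ht.
have m0 : \sum_(j <- U) m j = 0.
  by rewrite sumrB /pi !sum_by_tag // -hc -hc' subrr.
have [_ _ direct] := dec; have {}direct := direct U m uU mC m0.
case iU: (i \in U); first by apply/eqP; rewrite -subr_eq0; apply/eqP; apply: direct.
rewrite /pi [LHS]big1_seq => [|q /andP [/eqP qi qs]]; last by move: iU; rewrite -qi sU.
by rewrite big1_seq // => q /andP [/eqP qi qt]; move: iU; rewrite -qi tU.
Qed.

Lemma pi_in i c : Ci i (pi i c).
Proof. by apply: Ci_sum => q qs /eqP <-; apply: (split_ofP c).1. Qed.

Lemma piD i x y : pi i (x + y) = pi i x + pi i y.
Proof.
rewrite (@pi_of_split (split_of x ++ split_of y)) ?big_cat //=.
  by move=> q; rewrite mem_cat => /orP [] ?; [apply: (split_ofP x).1 | apply: (split_ofP y).1].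
by rewrite -(split_ofP x).2 -(split_ofP y).2.
Qed.

Lemma piZ i r x : pi i (r *: x) = r *: pi i x.
Proof.
rewrite (@pi_of_split [seq (q.1, r *: q.2) | q <- split_of x]).
- by rewrite big_map scaler_sumr.
- by move=> q /mapP [q' q's ->] /=; apply: CiZ; apply: (split_ofP x).1.
by rewrite big_map -scaler_sumr -(split_ofP x).2.
Qed.

Lemma pi_id i c : Ci i c -> pi i c = c.
Proof.
move=> h; rewrite (@pi_of_split [:: (i, c)]) ?big_cons ?big_nil /= ?eqxx ?addr0 //.
by move=> q; rewrite inE => /eqP ->.
Qed.

Lemma pi_other {i j c} : Ci j c -> j != i -> pi i c = 0.
Proof.
move=> h ji; rewrite (@pi_of_split [:: (j, c)]) ?big_cons ?big_nil /= ?(negPf ji) //.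
  by move=> q; rewrite inE => /eqP ->.
by rewrite addr0.
Qed.

Lemma sum_pi {U c} : uniq U -> (forall q, q \in split_of c -> q.1 \in U) ->
  \sum_(j <- U) pi j c = c.
Proof. by move=> uU sU; rewrite /pi sum_by_tag // -(split_ofP c).2. Qed.

Definition extend i (g : C -> R) := fun c => g (pi i c).

Lemma ldual_extend {i g} : ldual_on (Ci i) g -> ldual (extend i g).
Proof.
move=> [gD gZ]; split=> [x y _ _ | r x _]; rewrite /extend ?piD ?piZ.
  by apply: gD; apply: pi_in.
by apply: gZ; apply: pi_in.
Qed.

(* Since every summand is a subcomodule, m_(1) phi(m_(2)) only depends on
   the i-th component of m when phi kills the other summands. *)
Lemma coact_eval_component i {phi} m : ldual phi ->
  (forall j x, j != i -> Ci j x -> phi x = 0) ->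
  coact_eval K phi m = coact_eval K phi (pi i m).
Proof.
move=> lp phi0; set U := undup (i :: [seq q.1 | q <- split_of m]).
have sU q : q \in split_of m -> q.1 \in U.
  by move=> qs; rewrite mem_undup inE map_f ?orbT.
rewrite -{1}(sum_pi (undup_uniq _) sU) (big_morph _ (coact_evalD K lp) (coact_eval0 K lp)).
rewrite (bigD1_seq i) ?undup_uniq ?mem_undup ?inE ?eqxx //= big1 ?addr0 // => j ji.
have [D [tD DP]] := Ci_coact (pi_in j m).
rewrite /coact_eval (contract_teq2 K lp tD) /contract big1_seq // => q /andP [_ qD].
by rewrite (phi0 j) ?ra0r //; apply: DP.
Qed.

Lemma rational_extend {i g} : ldual_on (Ci i) g -> rational K (Ci i) g ->
  rational K (fun _ => True) (extend i g).
Proof.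
move=> lg [L [LP eL]].
exists [seq (extend i q.1, q.2) | q <- L]; split.
  by move=> q /List.in_map_iff [q' [<- /LP]]; apply: ldual_extend.
move=> f m D lf _ [tD _]; rewrite big_map /=.
have lext := ldual_extend lg.
have ext0 j x : j != i -> Ci j x -> extend i g x = 0.
  by move=> ji xj; rewrite /extend (pi_other xj ji) (ldual_on0 lg (Ci0 i)).
have [Di repDi] := Ci_coact (pi_in i m); have [tDi DiP] := repDi.
rewrite -[\sum_(q <- D) _]/(contract K (extend i g) D) -(contract_teq2 K lext tD).
rewrite -/(coact_eval K _ m) (coact_eval_component i m lext ext0) /coact_eval.
rewrite (contract_teq2 K lext tDi) -(eL f (pi i m) Di lf (pi_in i m) repDi).
by congr (f _); apply: eq_big_seq => q qD; rewrite /extend pi_id //; apply: DiP.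
Qed.

(* Restriction: density in *C gives density in each *C_i, approximating
   h o pi_i and restricting the approximation. *)
Lemma rat_dense_component :
  rat_dense K (fun _ => True) -> forall i, rat_dense K (Ci i).
Proof.
move=> dense i h F lh FCi.
have [G [lG [rG eG]]] := dense (extend i h) F (ldual_extend lh) (fun _ _ => I).
exists G; split; [exact: ldual_on_sub (fun _ _ => I) lG | split].
  exact: rational_sub rG.
by move=> x xF; rewrite eG // /extend pi_id //; apply: FCi.
Qed.

Lemma rational_approx_components (h : C -> R) (F : seq C) (S : seq J) :
  (forall i, rat_dense K (Ci i)) -> ldual h ->
  exists G, [/\ ldual G, rational K (fun _ => True) G &
    forall x, x \in F -> G x = \sum_(i <- S) h (pi i x)].
Proof.
move=> dense lh; elim: S => [|i S [G [lG rG eG]]].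
  exists (fun _ => 0); split; [|exact: rational_zero|by move=> x _; rewrite big_nil].
  by split=> [x y _ _ | r x _]; rewrite ?addr0 ?mulr0.
have lhi : ldual_on (Ci i) h := ldual_on_sub (fun _ _ => I) lh.
have piF x : x \in [seq pi i y | y <- F] -> Ci i x by move=> /mapP [y _ ->]; apply: pi_in.
have [g [lg [rg eg]]] := dense i h _ lhi piF.
exists (fun c => extend i g c + G c); split.
- exact: ldual_on_add (ldual_extend lg) lG.
- exact: rational_add (rational_extend lg rg) rG.
by move=> x xF; rewrite big_cons eG // /extend eg // map_f.
Qed.

(* Gluing: density in every *C_i gives density in *C, using the finitely
   many components met by F. *)
Lemma rat_dense_glue :
  (forall i, rat_dense K (Ci i)) -> rat_dense K (fun _ => True).
Proof.
move=> dense h F lh _.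
set S := undup (flatten [seq [seq q.1 | q <- split_of x] | x <- F]).
have [G [lG rG eG]] := rational_approx_components h F S dense lh.
exists G; split=> //; split=> // x xF.
rewrite eG // -(big_morph h (fun x y => lh.1 x y I I) (ldual_on0 lh I)).
rewrite sum_pi ?undup_uniq // => q qs; rewrite mem_undup.
by apply/flatten_mapP; exists x => //; apply: map_f.
Qed.

End Decomposition.

Theorem proposition2p4 (R : pzRingType) (C : lmodType R) (K : coring C)
  (alpha : left_alpha_condition K)
  (I : eqType) (Ci : I -> C -> Prop) (dec : comod_decomposition K Ci) :
  (forall i, rat_dense K (Ci i)) <-> rat_dense K (fun _ => True).
Proof.
split; [exact: rat_dense_glue dec | exact: rat_dense_component dec].
Qed.
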